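(* Let $D$ be a non-commutative division ring which is algebraic over its center and weakly locally finite. Then the multiplicative group $D^*$ is not finitely generated.
   Context: A division ring is weakly locally finite if the division subring generated by any finite subset is finite dimensional over its own center; it is algebraic if every element is algebraic over the center. *)

From HB Require Import structures.
From mathcomp Require Import all_boot all_algebra.
Set Implicit Arguments. Unset Strict Implicit. Unset Printing Implicit Defensive.
Import GRing.Theory.
Local Open Scope ring_scope.

Definition is_division_ring (D : unitRingType) : Prop :=
  forall x : D, x != 0 -> x \is a GRing.unit.

Definition central (D : unitRingType) (z : D) : Prop := forall y : D, z * y = y * z.

Definition algebraic_over_center (D : unitRingType) : Prop :=
  forall x : D, exists p : {poly D},
    p != 0 /\ (forall i, central p`_i) /\ root p x.

Definition divring_closedP (D : unitRingType) (P : D -> Prop) : Prop :=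
  [/\ P 1,
      forall x y, P x -> P y -> P (x - y),
      forall x y, P x -> P y -> P (x * y)
    & forall x, P x -> x != 0 -> P x^-1].

Definition gen_divring (D : unitRingType) (S : seq D) (x : D) : Prop :=
  forall P : D -> Prop, divring_closedP P -> (forall s, s \in S -> P s) -> P x.

Definition center_of (D : unitRingType) (K : D -> Prop) (z : D) : Prop :=
  K z /\ forall y, K y -> z * y = y * z.

Definition findim_over_center (D : unitRingType) (K : D -> Prop) : Prop :=
  exists b : seq D, (forall v, v \in b -> K v) /\
    forall y, K y -> exists c : seq D,
      size c = size b /\ (forall z, z \in c -> center_of K z) /\
      y = \sum_(i < size b) c`_i * b`_i.

Definition weakly_locally_finite (D : unitRingType) : Prop :=
  forall S : seq D, findim_over_center (gen_divring S).

Definition gen_mulgroup (D : unitRingType) (g : seq D) (x : D) : Prop :=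
  forall P : D -> Prop, P 1 -> (forall x y, P x -> P y -> P (x * y)) ->
    (forall x, P x -> P x^-1) -> (forall s, s \in g -> P s) -> P x.

Definition units_fin_gen (D : unitRingType) : Prop :=
  exists g : seq D, (forall s, s \in g -> s != 0) /\
    forall x : D, x != 0 -> gen_mulgroup g x.

From HB Require Import structures.
From mathcomp Require Import all_boot all_algebra all_field.
From mathcomp Require Import boolp.
Set Implicit Arguments. Unset Strict Implicit. Unset Printing Implicit Defensive.
Import GRing.Theory Num.Theory.
Local Open Scope ring_scope.

(* Suppose D^* is generated by g_1, ..., g_k.  Then D is the division ring
   generated by the g_i, hence of finite dimension n over its center Z.  The
   determinant of left multiplication is a homomorphism N : D^* -> Z^* with
   N a = a^n on Z^*, so every n-th power in Z^* lies in the subgroup generated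
   by N g_1, ..., N g_k.  A field with this property is finite: if all its
   elements have finite order, the N g_i have a common order and the n-th
   powers take finitely many values; otherwise it contains k + 1 multiplicatively
   independent elements (distinct primes in characteristic 0, distinct
   irreducible polynomials over F_p evaluated at an element of infinite order in
   characteristic p), whose n-th powers cannot all lie in a group generated by k
   elements.  So Z, hence D, is finite, and D is commutative by Wedderburn's
   theorem. *)

Lemma cover_of_bounded_uniq (T : eqType) (P : T -> Prop) (m : nat) :
  (forall s : seq T, uniq s -> (forall x, x \in s -> P x) -> (size s <= m)%N) ->
  exists s : seq T, forall x, P x -> x \in s.
Proof.
move=> bounded.
pose fits j := `[< exists2 s : seq T, uniq s & (forall x, x \in s -> P x) /\ size s = j >].
have fits0 : exists j, fits j by exists 0%N; apply/asboolP; exists [::].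
have fits_le j : fits j -> (j <= m)%N by move=> /asboolP[s us [Ps <-]]; exact: bounded.
case: (ex_maxnP fits0 fits_le) => j /asboolP[s us [Ps <-]] max_s.
exists s => x Px; apply: contraT => s'x.
have /max_s : fits (size (x :: s)) by apply/asboolP; exists (x :: s);
  [rewrite /= s'x | split=> // y; rewrite inE => /predU1P[->|/Ps]].
by rewrite ltnn.
Qed.

Lemma root_cover (F : fieldType) (p : {poly F}) : p != 0 ->
  exists s : seq F, forall x, root p x -> x \in s.
Proof.
move=> p_neq0; apply: (@cover_of_bounded_uniq _ _ (size p)) => s us roots_s.
by apply/ltnW/max_poly_roots; rewrite ?uniq_rootsE //; apply/allP.
Qed.

Lemma expf_preimage_cover (F : fieldType) (n : nat) (L : seq F) : (0 < n)%N ->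
  exists s : seq F, forall x, x ^+ n \in L -> x \in s.
Proof.
move=> n_gt0; elim: L => [|c L [s Ls]]; first by exists [::].
have [|s' s'_roots] := @root_cover _ ('X^n - c%:P).
  by rewrite -size_poly_eq0 size_XnsubC.
exists (s' ++ s) => x; rewrite inE mem_cat => /predU1P[xn_c|/Ls->]; last by rewrite orbT.
by rewrite s'_roots // /root !hornerE xn_c subrr.
Qed.

Definition in_mulgen (F : fieldType) (I : finType) (d : I -> F) (a : F) : Prop :=
  exists e : I -> int, a = \prod_i d i ^ e i.

Lemma prodfXz (F : fieldType) (I : finType) (x : I -> F) (z : int) :
  (\prod_i x i) ^ z = \prod_i x i ^ z.
Proof. by apply: (big_morph (fun y => y ^ z)) => [a b|]; rewrite ?expfzMl ?exp1rz. Qed.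

Lemma expfz_sum (F : fieldType) (I : finType) (x : F) (e : I -> int) : x != 0 ->
  x ^ (\sum_i e i) = \prod_i x ^ e i.
Proof. by move=> x_neq0; apply: (big_morph (fun z => x ^ z)) => // a b; rewrite expfzDr. Qed.

Lemma expfz_modn (F : fieldType) (x : F) (r : nat) (e : int) :
  (0 < r)%N -> x ^+ r = 1 -> x ^ e = x ^+ `|(e %% r)%Z|%N.
Proof.
move=> r_gt0 xr1.
have x_neq0 : x != 0.
  by apply: contra_eq_neq xr1 => ->; rewrite expr0n gtn_eqF //= eq_sym oner_neq0.
have mod_ge0 : (0 <= e %% r)%Z by rewrite modz_ge0 // -lt0n.
rewrite {1}(divz_eq e r) expfzDr // -exprz_exp exprzAC.
by rewrite [x ^ r%:Z]xr1 exp1rz mul1r -{1}(gez0_abs mod_ge0).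
Qed.

Lemma common_order (R : ringType) (I : finType) (x : I -> R) :
  (forall i, exists2 m, (0 < m)%N & x i ^+ m = 1) ->
  exists2 r, (0 < r)%N & forall i, x i ^+ r = 1.
Proof.
move=> /fin_all_exists2[m m_gt0 xm1].
exists (\prod_i m i)%N; first exact: prodn_gt0.
by move=> i; rewrite (bigD1 i) //= exprM xm1 expr1n.
Qed.

Lemma torsion_field_finite (F : fieldType) (I : finType) (n : nat) (d : I -> F) :
  (0 < n)%N -> (forall i, d i != 0) ->
  (forall a : F, a != 0 -> in_mulgen d (a ^+ n)) ->
  (forall a : F, a != 0 -> exists2 m, (0 < m)%N & a ^+ m = 1) ->
  exists s : seq F, forall a, a \in s.
Proof.
move=> n_gt0 d_neq0 powers torsion.
have [r r_gt0 dr1] := common_order (fun i => torsion _ (d_neq0 i)).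
have [s Ls] := expf_preimage_cover
  (codom (fun f : {ffun I -> 'I_r} => \prod_i d i ^+ f i)) n_gt0.
exists (0 :: s) => a; rewrite inE; have [//|a_neq0 /=] := eqVneq a 0.
apply: Ls; have [e ->] := powers a a_neq0.
have mod_lt i : (`|(e i %% r)%Z| < r)%N.
  by rewrite -ltz_nat gez0_abs ?modz_ge0 ?ltz_pmod // -lt0n.
apply/codomP; exists [ffun i => Ordinal (mod_lt i)].
by apply: eq_bigr => i _; rewrite ffunE /= (expfz_modn _ r_gt0 (dr1 i)).
Qed.

Lemma int_vectors_dependent (k : nat) (E : 'I_k.+1 -> 'I_k -> int) :
  exists v : 'I_k.+1 -> int, (exists j, v j != 0) /\ forall i, \sum_j v j * E j i = 0.
Proof.
pose A : 'M[rat]_(k.+1, k) := \matrix_(j, i) (E j i)%:~R.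
have : kermx A != 0.
  rewrite kermx_eq0 /row_free; apply/negP => /eqP rankA.
  by have := rank_leq_col A; rewrite rankA ltnn.
case/rowV0Pn => v /sub_kermxP vA v_neq0.
pose den := \prod_l denq (v 0 l).
pose w j : int := numq (v 0 j) * \prod_(l < k.+1 | l != j) denq (v 0 l).
have wE j : (w j)%:~R = v 0 j * den%:~R :> rat.
  rewrite /w intrM numqE /den [in RHS](bigD1 j) //= intrM mulrA.
  by congr (_ * _); rewrite rmorph_prod.
exists w; split.
  have [j vj] : exists j, v 0 j != 0.
    apply/existsP; move: v_neq0; apply: contraR; rewrite negb_exists => /forallP v0.
    by apply/eqP/rowP => j; rewrite mxE; apply/eqP/negPn/v0.
  exists j; rewrite -(@intr_eq0 rat) wE mulf_neq0 // intr_eq0.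
  by apply/prodf_neq0 => l _; rewrite denq_neq0.
move=> i; apply/eqP; rewrite -(@intr_eq0 rat) rmorph_sum /=.
under eq_bigr => j _ do rewrite intrM wE mulrAC.
rewrite -mulr_suml (_ : \sum_j _ = 0) ?mul0r //.
have := congr1 (fun M : 'M[rat]_(1, k) => M 0 i) vA; rewrite !mxE; apply: etrans.
by apply: eq_bigr => j _; rewrite mxE.
Qed.

Lemma mul_dependent_of_powers (F : fieldType) (k n : nat) (d : 'I_k -> F)
    (u : 'I_k.+1 -> F) :
  (0 < n)%N -> (forall i, d i != 0) -> (forall j, in_mulgen d (u j ^+ n)) ->
  exists w : 'I_k.+1 -> int, (exists j, w j != 0) /\ \prod_j u j ^ w j = 1.
Proof.
move=> n_gt0 d_neq0 /fin_all_exists[E uE].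
have [v [[j vj] Ev0]] := int_vectors_dependent E.
exists (fun j => n%:Z * v j); split; first by exists j; rewrite mulf_neq0 // -lt0n.
transitivity (\prod_j \prod_i d i ^ (E j i * v j)).
  apply: eq_bigr => l _; rewrite -exprz_exp [u l ^ n%:Z]uE prodfXz.
  by apply: eq_bigr => i _; rewrite exprz_exp.
rewrite exchange_big /=; apply: big1 => i _.
rewrite -expfz_sum // (_ : \sum_j _ = 0) //.
by rewrite -[RHS](Ev0 i); apply: eq_bigr => l _; rewrite mulrC.
Qed.

Definition mul_independent (F : fieldType) (I : finType) (u : I -> F) : Prop :=
  (forall j, u j != 0) /\
  forall w : I -> int, \prod_j u j ^ w j = 1 -> forall j, w j = 0.

Lemma mul_independent_of_expn (F : fieldType) (I : finType) (u : I -> F) :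
  (forall j, u j != 0) ->
  (forall a b : I -> nat, (forall j, a j = 0%N \/ b j = 0%N) ->
     \prod_j u j ^+ a j = \prod_j u j ^+ b j -> forall j, a j = 0%N) ->
  mul_independent u.
Proof.
move=> u_neq0 expn_inj; split=> // w uw1 j.
pose a j := if w j is Posz m then m else 0%N.
pose b j := if w j is Negz m then m.+1 else 0%N.
have uab : \prod_j u j ^+ a j = \prod_j u j ^+ b j.
  rewrite (eq_bigr (fun l => u l ^ w l * u l ^+ b l)); first by rewrite big_split /= uw1 mul1r.
  by move=> l _; rewrite /a /b; case: (w l) => m /=; rewrite ?mulr1 // mulVf ?expf_neq0.
have ab j' : a j' = 0%N \/ b j' = 0%N by rewrite /a /b; case: (w j'); [right|left].
have ba j' : b j' = 0%N \/ a j' = 0%N by case: (ab j'); [right|left].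
have a0 := expn_inj a b ab uab j.
have b0 := expn_inj b a ba (esym uab) j.
by move: a0 b0; rewrite /a /b; case: (w j) => // m /= ->.
Qed.

Fixpoint prime_seq (m : nat) : nat :=
  if m is m'.+1 then s2val (prime_above (prime_seq m')) else 2.

Lemma prime_seq_prime m : prime (prime_seq m).
Proof. by case: m => //= m; case: prime_above. Qed.

Lemma prime_seq_inj : injective prime_seq.
Proof.
apply: incn_inj; apply: leq_mono; apply: homo_ltn => [? ? ?|m]; first exact: ltn_trans.
by rewrite /=; case: prime_above.
Qed.

Lemma prime_expn_prod_inj (I : finType) (p : I -> nat) (a b : I -> nat) :
  (forall j, prime (p j)) -> injective p -> (forall j, a j = 0%N \/ b j = 0%N) ->
  (\prod_j p j ^ a j = \prod_j p j ^ b j)%N -> forall j, a j = 0%N.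
Proof.
move=> p_prime p_inj ab pab j; apply/eqP; rewrite eqn0Ngt; apply/negP => a_gt0.
have b0 : b j = 0%N by case: (ab j) => // a0; rewrite a0 in a_gt0.
have : (p j %| \prod_l p l ^ b l)%N by rewrite -pab (bigD1 j) //= dvdn_mulr // dvdn_exp.
rewrite Euclid_dvd_prod // big_has_cond => /hasP[l _ /andP[_]].
by rewrite Euclid_dvdX // dvdn_prime2 // => /andP[/eqP/p_inj <-]; rewrite b0.
Qed.

Lemma pchar0_natr_inj (F : fieldType) : [pchar F] =i pred0 ->
  injective (fun n : nat => n%:R : F).
Proof.
move=> /pcharf0P F0 m n; wlog le_mn : m n / (m <= n)%N => [W|].
  by case: (leqP m n) => [|/ltnW] le mn; [|apply/esym]; apply: W.
move/eqP; rewrite eq_sym -subr_eq0 -natrB // F0 subn_eq0 => le_nm.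
by apply/eqP; rewrite eqn_leq le_mn.
Qed.

Lemma pchar0_mul_independent (F : fieldType) (k : nat) : [pchar F] =i pred0 ->
  exists u : 'I_k -> F, mul_independent u.
Proof.
move=> F0; exists (fun j => (prime_seq j)%:R); apply: mul_independent_of_expn.
  by move=> j; move/pcharf0P: F0 => ->; rewrite -lt0n prime_gt0 ?prime_seq_prime.
move=> a b ab; rewrite -!(eq_bigr _ (fun j _ => natrX _ _ _)) -!natr_prod.
move/(pchar0_natr_inj F0); apply: prime_expn_prod_inj ab => [j|i j].
  exact: prime_seq_prime.
by move/prime_seq_inj/val_inj.
Qed.

Section IrreduciblePolynomials.
Variable K : fieldType.
Implicit Types p q r : {poly K}.

Lemma irredp_ndvd1 r : irreducible_poly r -> ~~ (r %| 1).
Proof. by case=> r_gt1 _; rewrite dvdp1 gtn_eqF. Qed.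

Lemma irredp_dvdM r p q : irreducible_poly r -> r %| p * q -> (r %| p) || (r %| q).
Proof.
move=> irr_r; have [//|r'p] := boolP (r %| p).
by rewrite Gauss_dvdpr ?irreducible_poly_coprime // => ->; rewrite orbT.
Qed.

Lemma irredp_dvd_prod (I : Type) (s : seq I) (f : I -> {poly K}) r :
  irreducible_poly r -> r %| \prod_(i <- s) f i -> has (fun i => r %| f i) s.
Proof.
move=> irr_r; elim: s => [|i s IHs]; first by rewrite big_nil (negbTE (irredp_ndvd1 irr_r)).
by rewrite big_cons /= => /(irredp_dvdM irr_r)/orP[->//|/IHs->]; rewrite orbT.
Qed.

Lemma irredp_dvdX r q m : irreducible_poly r -> r %| q ^+ m -> r %| q.
Proof.
move=> irr_r; elim: m => [|m IHm]; first by rewrite (negbTE (irredp_ndvd1 irr_r)).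
by rewrite exprS => /(irredp_dvdM irr_r)/orP[//|/IHm].
Qed.

Lemma irreducible_factor q : (1 < size q)%N -> exists2 r, irreducible_poly r & r %| q.
Proof.
have [m] := ubnP (size q); elim: m q => // m IHm q /ltnSE le_qm q_gt1.
have [irr_q|red_q] := EM (irreducible_poly q); first by exists q.
have [d [d_neq1 dq d'q]] : exists d : {poly K}, [/\ size d != 1%N, d %| q & ~~ (d %= q)].
  apply: contrapT => nod; apply: red_q; split=> // d d_neq1 dq.
  by apply: contrapT => /negP d'q; apply: nod; exists d.
have q_neq0 : q != 0 by rewrite -size_poly_gt0 ltnW.
have d_gt1 : (1 < size d)%N by rewrite ltn_neqAle eq_sym d_neq1 size_poly_gt0 (dvdpN0 dq).
have lt_dq : (size d < size q)%N by rewrite ltn_neqAle (dvdp_size_eqp dq) d'q dvdp_leq.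
have [r irr_r rd] := IHm d (leq_trans lt_dq le_qm) d_gt1.
by exists r => //; apply: dvdp_trans rd dq.
Qed.

Lemma irreducible_avoiding (I : finType) (r : I -> {poly K}) : (forall i, r i != 0) ->
  exists2 s, irreducible_poly s & forall i, ~~ (s %| r i).
Proof.
move=> r_neq0; pose P := \prod_i r i.
have P_neq0 : P != 0 by apply/prodf_neq0.
have [|s irr_s sP] := @irreducible_factor (P * 'X + 1).
  by rewrite size_polyDl size_mulX // ?size_poly1 ltnS lt0n size_poly_eq0.
exists s => // i; apply: contraL sP => s_ri.
rewrite dvdp_addr ?irredp_ndvd1 // dvdp_mulr // (dvdp_trans s_ri) //.
by rewrite /P (bigD1 i) //= dvdp_mulIl.
Qed.

Lemma irreducible_family (k : nat) : exists r : 'I_k -> {poly K},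
  (forall j, irreducible_poly (r j)) /\ (forall i j, r i %= r j -> i = j).
Proof.
elim: k => [|k [r [irr_r r_inj]]]; first by exists (fun=> 0); split=> [[]|[]].
have [s irr_s s_new] := irreducible_avoiding (fun i => irredp_neq0 (irr_r i)).
have s_nassoc i : ~ r i %= s by move=> /eqp_dvdr ri_s; move: (s_new i); rewrite ri_s dvdpp.
exists (fun j => if unlift ord_max j is Some i then r i else s); split.
  by move=> j; case: unlift.
move=> i j; case: unliftP => [i'|] ->; case: unliftP => [j'|] -> //.
- by move/r_inj->.
- by move/s_nassoc.
- by rewrite eqp_sym => /s_nassoc.
Qed.

Lemma irredp_expn_prod_inj (I : finType) (r : I -> {poly K}) (a b : I -> nat) :
  (forall j, irreducible_poly (r j)) -> (forall i j, r i %= r j -> i = j) ->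
  (forall j, a j = 0%N \/ b j = 0%N) ->
  \prod_j r j ^+ a j = \prod_j r j ^+ b j -> forall j, a j = 0%N.
Proof.
move=> irr_r r_inj ab rab j; apply/eqP; rewrite eqn0Ngt; apply/negP => a_gt0.
have b0 : b j = 0%N by case: (ab j) => // a0; rewrite a0 in a_gt0.
have : r j %| \prod_l r l ^+ b l by rewrite -rab (bigD1 j) //= dvdp_mulr // dvdp_exp.
case/(irredp_dvd_prod (irr_r j))/hasP => l _ rj_rl.
have /r_inj jl : r j %= r l.
  by apply: (irr_r l); [case: (irr_r j) => /gtn_eqF-> | apply: irredp_dvdX rj_rl].
by move: rj_rl; rewrite -jl b0 expr0 (negbTE (irredp_ndvd1 (irr_r j))).
Qed.

End IrreduciblePolynomials.

Section PositiveCharacteristic.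
Variables (F : fieldType) (p : nat) (pF : p \in [pchar F]).
(* F as an 'F_p-algebra, so that polynomials over 'F_p can be evaluated in F. *)
Local Notation F_p := (pPrimeCharType pF).

Lemma horner_alg_nontorsion_neq0 (t : F_p) : t != 0 ->
    (forall m, (0 < m)%N -> t ^+ m != 1) ->
  forall q : {poly 'F_p}, q != 0 -> horner_alg t q != 0.
Proof.
move=> t_neq0 t_nontorsion q q_neq0; apply/negP => /eqP qt0.
(* Pigeonhole: two powers of 'X agree modulo q, so two powers of t coincide. *)
have tX m : t ^+ m = horner_alg t ('X^m %% q).
  rewrite -{1}(horner_algX t) -rmorphXn {1}(divp_eq 'X^m q).
  by rewrite rmorphD rmorphM /= qt0 mulr0 add0r.
have mod_small m : (size ('X^m %% q)%R <= (size q).-1)%N.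
  by rewrite -ltnS prednK ?ltn_modp // size_poly_gt0.
pose f (m : 'I_#|{poly_(size q).-1 'F_p}|.+1) := NPoly (mod_small m).
have /injectivePn[i [j ij /(congr1 val)/= fij]] : ~~ injectiveb f.
  by apply/injectiveP => /leq_card; rewrite card_ord ltnn.
have tij : t ^+ i = t ^+ j by rewrite !tX fij.
have no_repeat m1 m2 : (m1 < m2)%N -> t ^+ m1 != t ^+ m2.
  move=> lt12; rewrite -(subnKC (ltnW lt12)) exprD -{1}[t ^+ m1]mulr1.
  by rewrite (inj_eq (mulfI (expf_neq0 m1 t_neq0))) eq_sym t_nontorsion // subn_gt0.
move: ij; case: (ltngtP i j) => [/no_repeat|/no_repeat|/val_inj->]; rewrite ?tij ?eqxx //.
Qed.

Lemma pchar_mul_independent (k : nat) (t : F) : t != 0 ->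
    (forall m, (0 < m)%N -> t ^+ m != 1) ->
  exists u : 'I_k -> F, mul_independent u.
Proof.
move=> t_neq0 t_nontorsion.
suff [u u_indep] : exists u : 'I_k -> F_p, mul_independent u by exists u.
have horner_inj : injective (horner_alg (t : F_p)).
  move=> P Q /eqP; rewrite -subr_eq0 -rmorphB; apply: contraTeq => P_neq_Q.
  by apply: horner_alg_nontorsion_neq0; rewrite ?subr_eq0.
have [r [irr_r r_inj]] := irreducible_family 'F_p k.
exists (fun j => horner_alg (t : F_p) (r j)); apply: mul_independent_of_expn.
  by move=> j; rewrite -(rmorph0 (horner_alg (t : F_p))) (inj_eq horner_inj) irredp_neq0.
move=> a b ab; rewrite -!(eq_bigr _ (fun j _ => rmorphXn _ _ _)) -!rmorph_prod.
by move/horner_inj; apply: irredp_expn_prod_inj ab.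
Qed.

End PositiveCharacteristic.

Lemma field_finite_of_fingen_powers (F : fieldType) (k n : nat) (d : 'I_k -> F) :
  (0 < n)%N -> (forall i, d i != 0) ->
  (forall a : F, a != 0 -> in_mulgen d (a ^+ n)) ->
  exists s : seq F, forall a, a \in s.
Proof.
move=> n_gt0 d_neq0 powers.
have [torsion|] := EM (forall a : F, a != 0 -> exists2 m, (0 < m)%N & a ^+ m = 1).
  exact: torsion_field_finite n_gt0 d_neq0 powers torsion.
move=> /existsNP[t /not_implyP[t_neq0 t_infinite_order]].
have t_nontorsion m : (0 < m)%N -> t ^+ m != 1.
  by move=> m_gt0; apply/eqP => tm1; apply: t_infinite_order; exists m.
have [u [u_neq0 u_indep]] : exists u : 'I_k.+1 -> F, mul_independent u.
  have [[p pF]|no_pchar] := EM (exists p, p \in [pchar F]).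
    exact: (pchar_mul_independent pF _ t_neq0 t_nontorsion).
  by apply: pchar0_mul_independent => p; apply/negbTE/negP => pF; apply: no_pchar; exists p.
have [w [[j wj] uw1]] := mul_dependent_of_powers n_gt0 d_neq0 (fun j => powers _ (u_neq0 j)).
by move: wj; rewrite (u_indep w uw1) eqxx.
Qed.

Section FiniteDivisionRing.
Variables (R : unitRingType) (s : seq R).
Hypothesis s_full : forall x : R, x \in s.

(* A copy of R carrying the finite type structure enumerated by s. *)
Definition fin_carrier : Type := R.
HB.instance Definition _ := GRing.UnitRing.on fin_carrier.

Lemma fin_carrier_pickK :
  pcancel (fun x : fin_carrier => index x s) (fun i => Some (nth 0 s i : fin_carrier)).
Proof. by move=> x; rewrite nth_index. Qed.
HB.instance Definition _ := PCanIsCountable fin_carrier_pickK.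

Lemma fin_carrier_enumP : Finite.axiom (undup s : seq fin_carrier).
Proof. by apply: Finite.uniq_enumP (undup_uniq _) _ => x; rewrite mem_undup s_full. Qed.
HB.instance Definition _ := isFinite.Build fin_carrier fin_carrier_enumP.

Lemma finite_divring_mulrC : is_division_ring R -> commutative (@GRing.mul R).
Proof.
move=> divR; apply: (@finDomain_mulrC fin_carrier) => x y xy0; apply/norP => -[x0 y0].
by move/negP: y0; apply; rewrite -(mulKr (divR x x0) y) xy0 mulr0.
Qed.

End FiniteDivisionRing.

Lemma divring_mulf_neq0 (D : unitRingType) (x y : D) : is_division_ring D ->
  x != 0 -> y != 0 -> x * y != 0.
Proof.
move=> divD /divD x_unit /divD y_unit.
by apply: contraTneq y_unit => xy0; rewrite -(unitrMr y x_unit) xy0 unitr0.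
Qed.

Lemma gen_divring_of_units_gen (D : unitRingType) (g : seq D) : is_division_ring D ->
  (forall s, s \in g -> s != 0) -> (forall x, x != 0 -> gen_mulgroup g x) ->
  forall x, gen_divring g x.
Proof.
move=> divD g_neq0 g_gen x P [P1 PB PM PV] Pg.
have [->|x_neq0] := eqVneq x 0; first by rewrite -(subrr 1); apply: PB.
case: (g_gen x x_neq0 (fun y => P y /\ y != 0)) => //.
- by split; last exact: oner_neq0.
- by move=> u v [Pu u0] [Pv v0]; split; [apply: PM | apply: divring_mulf_neq0].
- by move=> u [Pu u0]; split; [apply: PV | rewrite invr_eq0].
- by move=> u gu; split; [apply: Pg | apply: g_neq0].
Qed.

Fixpoint tuples_of (T : Type) (s : seq T) (m : nat) : seq (seq T) :=
  if m is m'.+1 then [seq x :: t | x <- s, t <- tuples_of s m'] else [:: [::]].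

Lemma mem_tuples_of (T : eqType) (s t : seq T) : {subset t <= s} -> t \in tuples_of s (size t).
Proof.
elim: t => [|x t IHt] t_s; first by rewrite inE.
apply: (allpairs_f (fun x t => x :: t)); first by rewrite t_s ?mem_head.
by apply: IHt => y ty; rewrite t_s // inE ty orbT.
Qed.

Section Center.
Variable D : unitRingType.
Hypothesis divD : is_division_ring D.

Definition centerb : pred D := fun x => `[< central x >].

Lemma centerbP x : reflect (central x) (centerb x).
Proof. exact: asboolP. Qed.

Lemma central_inv (z : D) : central z -> central z^-1.
Proof.
move=> cz y; have [->|z_neq0] := eqVneq z 0; first by rewrite invr0 mulr0 mul0r.
have z_unit := divD z_neq0.
by rewrite -{1}[y](mulrK z_unit) -cz !mulrA mulVr ?mul1r.
Qed.

Lemma centerb_divring_closed : divring_closed centerb.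
Proof.
split.
- by apply/centerbP => y; rewrite mul1r mulr1.
- by move=> x y /centerbP cx /centerbP cy; apply/centerbP => z; rewrite mulrBl mulrBr cx cy.
- move=> x y /centerbP cx /centerbP cy; apply/centerbP => z.
  by rewrite -mulrA (central_inv cy) mulrA cx mulrA.
Qed.

HB.instance Definition _ := GRing.isDivringClosed.Build D centerb centerb_divring_closed.

Record Zcenter := MkZcenter { zval :> D; zvalP : centerb zval }.
HB.instance Definition _ := [isSub for zval].
HB.instance Definition _ := [Choice of Zcenter by <:].
HB.instance Definition _ := [SubChoice_isSubUnitRing of Zcenter by <:].

Lemma Zcenter_mulC : commutative (@GRing.mul Zcenter).
Proof. by move=> [x x_center] y; apply: val_inj => /=; move/centerbP: (x_center). Qed.
HB.instance Definition _ := GRing.PzRing_hasCommutativeMul.Build Zcenter Zcenter_mulC.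

Lemma Zcenter_field : GRing.field_axiom Zcenter.
Proof. by move=> x x_neq0; apply: divD; rewrite -(inj_eq val_inj) in x_neq0. Qed.
HB.instance Definition _ := GRing.ComUnitRing_isField.Build Zcenter Zcenter_field.

Lemma zvalC (a : Zcenter) (y : D) : zval a * y = y * zval a.
Proof. by case: a => a /= /centerbP. Qed.

Lemma zvalM (a c : Zcenter) : zval (a * c) = zval a * zval c. Proof. by []. Qed.
Lemma zvalD (a c : Zcenter) : zval (a + c) = zval a + zval c. Proof. by []. Qed.
Lemma zvalB (a c : Zcenter) : zval (a - c) = zval a - zval c. Proof. by []. Qed.

Lemma zval_sum (I : finType) (f : I -> Zcenter) : zval (\sum_i f i) = \sum_i zval (f i).
Proof. exact: (big_morph zval zvalD). Qed.

Definition spans n (b : 'I_n -> D) :=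
  forall y : D, exists c : 'I_n -> Zcenter, y = \sum_i zval (c i) * b i.

Lemma exists_spans (K : D -> Prop) : (forall x, K x) -> findim_over_center K ->
  exists n (b : 'I_n -> D), spans b.
Proof.
move=> K_full [bs [_ bs_span]]; exists (size bs), (fun i => bs`_i) => y.
have [c [size_c [c_center ->]]] := bs_span y (K_full y).
have c_central (i : 'I_(size bs)) : centerb c`_i.
  have i_c : (i < size c)%N by rewrite size_c.
  by apply/centerbP => z; apply: (c_center _ (mem_nth 0 i_c)).2.
by exists (fun i => MkZcenter (c_central i)).
Qed.

Section Basis.
Variables (n : nat) (b : 'I_n -> D).
Hypothesis b_spans : spans b.

Lemma basis_size_gt0 : (0 < n)%N.
Proof.
have [c] := b_spans 1; rewrite lt0n; apply: contra_eq_neq => n0.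
have no_index : 'I_n -> False by rewrite n0 => -[].
by rewrite big1 ?oner_neq0 // => i; case: (no_index i).
Qed.

Hypothesis b_min : forall m (b' : 'I_m -> D), spans b' -> (n <= m)%N.

Lemma basis_free (c : 'I_n -> Zcenter) : \sum_i zval (c i) * b i = 0 -> forall i, c i = 0.
Proof.
move=> c_rel j; apply: contrapT => /eqP cj_neq0.
suff /b_min : spans (fun i : 'I_n.-1 => b (lift j i)).
  by rewrite leqNgt ltn_predL basis_size_gt0.
have bj : zval (c j) * b j = - \sum_(i < n.-1) zval (c (lift j i)) * b (lift j i).
  by move: c_rel; rewrite (bigD1_ord j) //= => /eqP; rewrite addr_eq0 => /eqP.
move=> y; have [e ->] := b_spans y; pose lambda := e j / c j.
exists (fun i => e (lift j i) - lambda * c (lift j i)); rewrite (bigD1_ord j) //=.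
have -> : zval (e j) * b j = zval lambda * (zval (c j) * b j).
  by rewrite mulrA -zvalM /lambda mulfVK.
rewrite bj mulrN mulr_sumr -sumrN -big_split /=; apply: eq_bigr => i _.
by rewrite /= mulrBl !mulrA addrC.
Qed.

Definition coord (y : D) : 'I_n -> Zcenter := projT1 (cid (b_spans y)).

Lemma coordP y : y = \sum_i zval (coord y i) * b i.
Proof. by rewrite /coord; case: cid. Qed.

Lemma coord_unique y (c : 'I_n -> Zcenter) :
  y = \sum_i zval (c i) * b i -> forall i, coord y i = c i.
Proof.
move=> yc i; apply/eqP; rewrite -subr_eq0; apply/eqP; move: i; apply: basis_free.
rewrite (eq_bigr (fun i => zval (coord y i) * b i - zval (c i) * b i)) => [|i _].
  by rewrite sumrB -coordP -yc subrr.
by rewrite zvalB mulrBl.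
Qed.

Lemma coordZ (a : Zcenter) y j : coord (zval a * y) j = a * coord y j.
Proof.
apply: (@coord_unique _ (fun j => a * coord y j)); rewrite {1}(coordP y) mulr_sumr.
by apply: eq_bigr => i _; rewrite zvalM mulrA.
Qed.

Lemma coord_basis i j : coord (b i) j = (j == i)%:R.
Proof.
apply: (@coord_unique _ (fun j => (j == i)%:R)).
by rewrite (bigD1 i) //= eqxx mul1r big1 ?addr0 // => l /negbTE->; rewrite mul0r.
Qed.

Definition lmul_mx (x : D) : 'M[Zcenter]_n := \matrix_(i, j) coord (x * b i) j.

Lemma mul_coordE x z : x * z = \sum_j zval (\sum_l coord z l * lmul_mx x l j) * b j.
Proof.
rewrite {1}(coordP z) mulr_sumr.
transitivity (\sum_l \sum_j zval (coord z l * lmul_mx x l j) * b j).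
  apply: eq_bigr => l _; rewrite mulrA -zvalC -mulrA {1}(coordP (x * b l)) mulr_sumr.
  by apply: eq_bigr => j _; rewrite mxE zvalM mulrA.
by rewrite exchange_big /=; apply: eq_bigr => j _; rewrite zval_sum mulr_suml.
Qed.

Lemma lmul_mxM x y : lmul_mx (x * y) = lmul_mx y *m lmul_mx x.
Proof.
apply/matrixP => i j; rewrite !mxE -mulrA (coord_unique (mul_coordE x (y * b i))).
by apply: eq_bigr => l _; rewrite [lmul_mx y i l]mxE.
Qed.

Lemma lmul_mx_central (a : Zcenter) : lmul_mx (zval a) = a%:M.
Proof. by apply/matrixP => i j; rewrite !mxE coordZ coord_basis eq_sym mulr_natr. Qed.

Definition norm (x : D) : Zcenter := \det (lmul_mx x).

Lemma normM x y : norm (x * y) = norm x * norm y.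
Proof. by rewrite /norm lmul_mxM det_mulmx mulrC. Qed.

Lemma norm_central (a : Zcenter) : norm (zval a) = a ^+ n.
Proof. by rewrite /norm lmul_mx_central det_scalar. Qed.

Lemma norm1 : norm 1 = 1.
Proof. by rewrite -[1]/(zval 1) norm_central expr1n. Qed.

Lemma norm_mulV x : x != 0 -> norm x * norm x^-1 = 1.
Proof. by move=> x_neq0; rewrite -normM mulrV ?norm1 ?divD. Qed.

Lemma norm_neq0 x : x != 0 -> norm x != 0.
Proof.
by move=> /norm_mulV normxV; apply: contra_eq_neq normxV => ->; rewrite mul0r eq_sym oner_neq0.
Qed.

Lemma normV x : x != 0 -> norm x^-1 = (norm x)^-1.
Proof.
by move=> x_neq0; apply: (mulfI (norm_neq0 x_neq0)); rewrite norm_mulV ?mulfV ?norm_neq0.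
Qed.

Lemma finite_of_finite_center (sZ : seq Zcenter) : (forall a, a \in sZ) ->
  exists sD : seq D, forall x, x \in sD.
Proof.
move=> sZ_full; exists [seq \sum_(i < n) zval (nth 0 t i) * b i | t <- tuples_of sZ n].
move=> y; apply/mapP; exists [seq coord y i | i <- enum 'I_n].
  have := @mem_tuples_of _ sZ [seq coord y i | i <- enum 'I_n] (fun a _ => sZ_full a).
  by rewrite size_map size_enum_ord.
rewrite {1}(coordP y); apply: eq_bigr => i _.
by rewrite (nth_map i) ?size_enum_ord // nth_ord_enum.
Qed.

Lemma norm_expn_in_mulgen (g : seq D) :
    (forall s, s \in g -> s != 0) -> (forall x, x != 0 -> gen_mulgroup g x) ->
  forall a : Zcenter, a != 0 -> in_mulgen (fun i : 'I_(size g) => norm g`_i) (a ^+ n).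
Proof.
move=> g_neq0 g_gen a a_neq0; pose d (i : 'I_(size g)) := norm g`_i.
have d_neq0 i : d i != 0 by apply/norm_neq0/g_neq0/mem_nth.
have za_neq0 : zval a != 0 by rewrite -(inj_eq val_inj) in a_neq0.
rewrite -norm_central.
case: (g_gen _ za_neq0 (fun x => x != 0 /\ in_mulgen d (norm x))) => //.
- by split; [exact: oner_neq0 | exists (fun=> 0); rewrite norm1 big1].
- move=> u v [u_neq0 [e ue]] [v_neq0 [e' ve]].
  split; first exact: divring_mulf_neq0.
  exists (fun i => e i + e' i); rewrite normM ue ve -big_split /=.
  by apply: eq_bigr => i _; rewrite expfzDr.
- move=> u [u_neq0 [e ue]]; split; first by rewrite invr_eq0.
  exists (fun i => - e i); rewrite normV // ue -prodfV.
  by apply: eq_bigr => i _; rewrite invr_expz.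
- move=> u gu; split; first exact: g_neq0.
  have u_idx : (index u g < size g)%N by rewrite index_mem.
  exists (fun i => ((i == Ordinal u_idx) : nat)%:Z).
  rewrite (bigD1 (Ordinal u_idx)) //= eqxx big1 ?mulr1 => [|i /negbTE->//].
  by rewrite /d nth_index.
Qed.

End Basis.

End Center.

Lemma fingen_units_commutative (D : unitRingType) : is_division_ring D ->
  weakly_locally_finite D -> units_fin_gen D -> commutative (@GRing.mul D).
Proof.
move=> divD wlf [g [g_neq0 g_gen]].
have [m [b0 b0_spans]] := exists_spans (gen_divring_of_units_gen divD g_neq0 g_gen) (wlf g).
have spans_ex : exists m, `[< exists b : 'I_m -> D, spans b >].
  by exists m; apply/asboolP; exists b0.
case: (ex_minnP spans_ex) => n /asboolP[b b_spans] n_min.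
have b_min m' (b' : 'I_m' -> D) : spans b' -> (n <= m')%N.
  by move=> b'_spans; apply: n_min; apply/asboolP; exists b'.
have [sZ sZ_full] := field_finite_of_fingen_powers (basis_size_gt0 b_spans)
  (fun i => norm_neq0 divD b_spans b_min (g_neq0 _ (mem_nth 0 (ltn_ord i))))
  (norm_expn_in_mulgen b_spans b_min g_neq0 g_gen).
have [sD sD_full] := finite_of_finite_center divD b_spans sZ_full.
exact: finite_divring_mulrC sD_full divD.
Qed.

Theorem corollary5p13 (D : unitRingType) :
  is_division_ring D ->
  (exists x y : D, x * y != y * x) ->
  algebraic_over_center D ->
  weakly_locally_finite D ->
  ~ units_fin_gen D.
Proof.
move=> divD [x [y xy_neq_yx]] _ wlf units_gen.
by move: xy_neq_yx; rewrite (fingen_units_commutative divD wlf units_gen) eqxx.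
Qed.
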